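(* Let $a>0$. For every $p\in(2,+\infty)$ there exist constants $M_p,\sigma_p,\gamma_p>0$ such that for every $x_0\in C^2([0,1])$, every $(d_0,d_1)\in\mathcal{U}(x_0)$ and every $t\ge0$, the classical solution $x$ of $\partial_tx(t,z)=a\,\partial_z^2x(t,z)$ on $(0,\infty)\times(0,1)$, $x(t,0)=d_0(t)$, $x(t,1)=d_1(t)$ for $t\ge0$, $x(0,z)=x_0(z)$ for $z\in[0,1]$, satisfies $\|x[t]\|_p\le M_pe^{-\sigma_pt}\|x_0\|_p+\gamma_p\max_{0\le s\le t}|d_0(s)|+\gamma_p\max_{0\le s\le t}|d_1(s)|$.
   Context: $\mathcal{U}(x_0)$ is the set of pairs $(d_0,d_1)\in C^2(\mathbb{R}_+)\times C^2(\mathbb{R}_+)$ with $d_0(0)=x_0(0)$, $d_1(0)=x_0(1)$, and $\sup_{t\ge0}|d_0(t)|<\infty$, $\sup_{t\ge0}|d_1(t)|<\infty$; for such data the problem has a unique classical solution $x\in C^0(\mathbb{R}_+\times[0,1])\cap C^{1,2}((0,\infty)\times(0,1))$ with $x[t]:=x(t,\cdot)\in C^2([0,1])$ for all $t\ge0$. $\|g\|_p=\left(\int_0^1|g(z)|^pdz\right)^{1/p}$. *)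

From Stdlib Require Import Reals Lra ClassicalEpsilon.
Open Scope R_scope.

(* Derivative of f at x relative to a set D (one-sided at endpoints). *)
Definition deriv_within (D : R -> Prop) (f : R -> R) (x l : R) : Prop :=
  forall eps, 0 < eps -> exists delta, 0 < delta /\
    forall h, h <> 0 -> Rabs h < delta -> D (x + h) ->
      Rabs ((f (x + h) - f x) / h - l) < eps.

Definition cont_within (D : R -> Prop) (f : R -> R) : Prop :=
  forall x, D x -> forall eps, 0 < eps -> exists delta, 0 < delta /\
    forall y, D y -> Rabs (y - x) < delta -> Rabs (f y - f x) < eps.

Definition C2_on (D : R -> Prop) (f : R -> R) : Prop :=
  exists f1 f2 : R -> R,
    (forall x, D x -> deriv_within D f x (f1 x)) /\
    (forall x, D x -> deriv_within D f1 x (f2 x)) /\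
    cont_within D f2.

Definition I01 (z : R) : Prop := 0 <= z <= 1.
Definition Rplus_set (t : R) : Prop := 0 <= t.

Definition cont2_on (D : R -> R -> Prop) (u : R -> R -> R) : Prop :=
  forall t z, D t z -> forall eps, 0 < eps -> exists delta, 0 < delta /\
    forall t' z', D t' z' -> Rabs (t' - t) < delta -> Rabs (z' - z) < delta ->
      Rabs (u t' z' - u t z) < eps.

Definition closed_dom (t z : R) : Prop := 0 <= t /\ 0 <= z <= 1.
Definition open_dom (t z : R) : Prop := 0 < t /\ 0 < z < 1.

Definition in_U (x0 d0 d1 : R -> R) : Prop :=
  C2_on Rplus_set d0 /\ C2_on Rplus_set d1 /\
  d0 0 = x0 0 /\ d1 0 = x0 1 /\
  (exists B, forall t, 0 <= t -> Rabs (d0 t) <= B) /\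
  (exists B, forall t, 0 <= t -> Rabs (d1 t) <= B).

(* x : R -> R -> R, x t z = x(t,z), is a classical solution of
   x_t = a x_zz, x(t,0)=d0 t, x(t,1)=d1 t, x(0,z)=x0 z, in
   C^0(R_+ x [0,1]) ∩ C^{1,2}((0,oo) x (0,1)) with x[t] in C^2([0,1]). *)
Definition classical_solution (a : R) (x0 d0 d1 : R -> R) (x : R -> R -> R) : Prop :=
  cont2_on closed_dom x /\
  (exists xt xz xzz : R -> R -> R,
     (forall t z, open_dom t z ->
        derivable_pt_lim (fun s => x s z) t (xt t z) /\
        derivable_pt_lim (fun w => x t w) z (xz t z) /\
        derivable_pt_lim (fun w => xz t w) z (xzz t z) /\
        xt t z = a * xzz t z) /\
     cont2_on open_dom xt /\ cont2_on open_dom xz /\ cont2_on open_dom xzz) /\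
  (forall t, 0 <= t -> C2_on I01 (x t)) /\
  (forall t, 0 <= t -> x t 0 = d0 t /\ x t 1 = d1 t) /\
  (forall z, I01 z -> x 0 z = x0 z).

(* y^q for y >= 0 with the convention 0^q = 0 (q > 0). *)
Definition nnpow (y q : R) : R := if Rlt_dec 0 y then Rpower y q else 0.

(* Riemann integral over [0,1] (0 if not Riemann integrable; the value does
   not depend on the integrability proof). *)
Definition RInt01 (f : R -> R) : R :=
  match excluded_middle_informative (inhabited (Riemann_integrable f 0 1)) with
  | left H => RiemannInt (epsilon H (fun _ => True))
  | right _ => 0
  end.

Definition Lp_norm (p : R) (g : R -> R) : R :=
  nnpow (RInt01 (fun z => nnpow (Rabs (g z)) p)) (1 / p).

(* max_{0<=s<=t} |d s| (as a supremum; it is attained for continuous d). *)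
Definition smax (d : R -> R) (t : R) : R :=
  epsilon (inhabits 0)
    (fun m => is_lub (fun y => exists s, 0 <= s <= t /\ y = Rabs (d s)) m).

(** Energy method. For a level [K] above both boundary data, the truncated
    energy [V(t) = ∫ ((x(t,z) - K)₊)^p dz] is supported away from the
    boundary, and integrating by parts gives
    [V' = -a (p-1) p ∫ ((x-K)₊)^(p-2) x_z² dz].  A second integration by
    parts against the weight [z - 1/2], followed by Young's inequality,
    bounds [V] by [1/(2a)] times this dissipation, so [V' <= -2a V] and
    [V(t) <= e^(-2at) V(0)].  Applying this to [x] and [-x], and using
    [|y|^p <= 2^p ((y-K)₊^p + (-y-K)₊^p + K^p)], yields the estimate with
    [M = 8], [σ = 2a/p], [γ = 4], after taking [K] arbitrarily close to
    [max |d0| + max |d1|]. *)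

From Stdlib Require Import Reals Lra ClassicalEpsilon.
From Coquelicot Require Import Coquelicot.
Open Scope R_scope.

Lemma locally_Rabs (y : R) (P : R -> Prop) :
  (exists d, 0 < d /\ forall z, Rabs (z - y) < d -> P z) -> locally y P.
Proof.
  intros [d [Hd H]]. exists (mkposreal d Hd). intros z Hz. apply H. exact Hz.
Qed.

Lemma continuous_Reps (f : R -> R) (x : R) :
  continuous f x <->
  forall e, 0 < e -> exists d, 0 < d /\ forall y, Rabs (y - x) < d -> Rabs (f y - f x) < e.
Proof.
  split.
  - intros H e He. apply continuity_pt_filterlim in H.
    destruct (H e He) as [d [Hd H']]. exists d; split; auto.
    intros y Hy. destruct (Req_dec y x) as [->|Hyx].
    + rewrite Rminus_diag, Rabs_R0; auto.
    + apply H'; repeat split; auto.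
  - intros H. apply continuity_pt_filterlim. intros e He.
    destruct (H e He) as [d [Hd H']]. exists d; split; auto.
    intros y [_ Hy]. apply H'. exact Hy.
Qed.

Lemma is_derive_eq (f : R -> R) x l l' : is_derive f x l -> l = l' -> is_derive f x l'.
Proof. intros H ->; exact H. Qed.

Lemma Rpower_gt0 x y : 0 < Rpower x y.
Proof. apply exp_pos. Qed.

Lemma Rpower_lt_of_lt_root r e h : 0 < r -> 0 < e -> 0 < h -> h < Rpower e (1/r) ->
  Rpower h r < e.
Proof.
  intros Hr He Hh Hlt.
  replace e with (Rpower (Rpower e (1/r)) r).
  - apply Rlt_Rpower_l; lra.
  - rewrite Rpower_mult. replace (1/r*r) with 1 by (field; lra). apply Rpower_1; auto.
Qed.

Lemma nnpow_Rpower y q : 0 < y -> nnpow y q = Rpower y q.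
Proof. intros. unfold nnpow. destruct (Rlt_dec 0 y); [auto|lra]. Qed.

Lemma nnpow_nonpos y q : y <= 0 -> nnpow y q = 0.
Proof. intros. unfold nnpow. destruct (Rlt_dec 0 y); [lra|auto]. Qed.

Lemma nnpow_ge0 y q : 0 <= nnpow y q.
Proof. unfold nnpow. destruct (Rlt_dec 0 y); [left; apply Rpower_gt0|lra]. Qed.

Lemma nnpow_le X Y r : X <= Y -> 0 < r -> nnpow X r <= nnpow Y r.
Proof.
  intros H Hr. destruct (Rle_dec X 0).
  - rewrite (nnpow_nonpos X) by auto. apply nnpow_ge0.
  - rewrite !nnpow_Rpower by lra. apply Rle_Rpower_l; lra.
Qed.

Lemma nnpow_mult k X r : 0 < k -> 0 <= X -> nnpow (k * X) r = nnpow k r * nnpow X r.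
Proof.
  intros Hk [HX|<-].
  - rewrite !nnpow_Rpower by nra. rewrite Rpower_mult_distr; auto.
  - rewrite Rmult_0_r, !(nnpow_nonpos 0) by lra. ring.
Qed.

Lemma nnpow_Rpower_inv K p : 0 < K -> 0 < p -> nnpow (Rpower K p) (1/p) = K.
Proof.
  intros. rewrite nnpow_Rpower by apply Rpower_gt0. rewrite Rpower_mult.
  replace (p * (1/p)) with 1 by (field; lra). apply Rpower_1; auto.
Qed.

Lemma nnpow_exp y r : nnpow (exp y) r = exp (y * r).
Proof.
  rewrite nnpow_Rpower by apply exp_pos. unfold Rpower. rewrite ln_exp. f_equal; ring.
Qed.

Lemma nnpow_le_self k r : 1 <= k -> 0 < r <= 1 -> nnpow k r <= k.
Proof.
  intros. rewrite nnpow_Rpower by lra. rewrite <- (Rpower_1 k) at 2 by lra.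
  apply Rle_Rpower; lra.
Qed.

Lemma nnpow_plus_le X Y r : 0 <= X -> 0 <= Y -> 0 < r <= 1 ->
  nnpow (X + Y) r <= 2 * (nnpow X r + nnpow Y r).
Proof.
  intros HX HY Hr.
  assert (H2 : nnpow 2 r <= 2) by (apply nnpow_le_self; lra).
  assert (Hle : forall U W, 0 <= U <= W -> nnpow (U + W) r <= 2 * (nnpow U r + nnpow W r)).
  { intros U W HUW. assert (GU := nnpow_ge0 U r). assert (GW := nnpow_ge0 W r).
    destruct (Req_dec W 0) as [->|HW0].
    - replace U with 0 by lra. rewrite Rplus_0_r, (nnpow_nonpos 0) by lra. lra.
    - apply (Rle_trans _ (nnpow (2 * W) r)); [apply nnpow_le; lra|].
      rewrite nnpow_mult by lra. nra. }
  destruct (Rle_dec X Y); [apply Hle; lra|].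
  rewrite Rplus_comm, (Rplus_comm (nnpow X r)). apply Hle; lra.
Qed.

Lemma continuous_nnpow r y : 0 < r -> continuous (fun w => nnpow w r) y.
Proof.
  intros Hr. destruct (Rtotal_order y 0) as [Hy|[->|Hy]].
  - apply continuous_Reps. intros e He. exists (-y); split; [lra|].
    intros z Hz. apply Rabs_def2 in Hz.
    rewrite !nnpow_nonpos, Rminus_0_r, Rabs_R0; lra.
  - apply continuous_Reps. intros e He. exists (Rpower e (1/r)); split; [apply Rpower_gt0|].
    intros z Hz. rewrite (nnpow_nonpos 0), Rminus_0_r by lra. rewrite Rminus_0_r in Hz.
    destruct (Rlt_dec 0 z).
    + rewrite nnpow_Rpower, Rabs_right by (auto; left; apply Rpower_gt0).
      apply Rpower_lt_of_lt_root; auto. rewrite Rabs_right in Hz; lra.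
    + rewrite nnpow_nonpos, Rabs_R0; lra.
  - apply (continuous_ext_loc _ (fun w => Rpower w r)).
    + apply locally_Rabs. exists y; split; auto. intros z Hz. apply Rabs_def2 in Hz.
      rewrite nnpow_Rpower; auto; lra.
    + apply continuity_pt_filterlim, derivable_continuous_pt.
      exists (r * Rpower y (r-1)). apply derivable_pt_lim_power; auto.
Qed.

Lemma continuous_nnpow_abs p y : 0 < p -> continuous (fun y => nnpow (Rabs y) p) y.
Proof.
  intros Hp. apply (continuous_comp Rabs (fun w => nnpow w p)).
  - apply continuous_Rabs.
  - apply continuous_nnpow; auto.
Qed.

Lemma is_derive_nnpow r y : 1 < r -> is_derive (fun w => nnpow w r) y (r * nnpow y (r-1)).
Proof.
  intros Hr. destruct (Rtotal_order y 0) as [Hy|[->|Hy]].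
  - rewrite nnpow_nonpos, Rmult_0_r by lra.
    apply (is_derive_ext_loc (fun _ => 0)).
    + apply locally_Rabs. exists (-y); split; [lra|]. intros z Hz. apply Rabs_def2 in Hz.
      rewrite nnpow_nonpos; auto; lra.
    + apply is_derive_Reals, derivable_pt_lim_const.
  - rewrite nnpow_nonpos, Rmult_0_r by lra.
    apply is_derive_Reals. intros e He.
    exists (mkposreal _ (Rpower_gt0 e (1/(r-1)))). intros h Hh Hlt. simpl in Hlt.
    rewrite Rplus_0_l, (nnpow_nonpos 0), !Rminus_0_r by lra.
    destruct (Rlt_dec 0 h).
    + rewrite nnpow_Rpower by auto.
      replace (Rpower h r / h) with (Rpower h (r-1)).
      * rewrite Rabs_right by (left; apply Rpower_gt0).
        apply Rpower_lt_of_lt_root; try lra. rewrite Rabs_right in Hlt; lra.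
      * replace r with ((r-1)+1) at 2 by ring. rewrite Rpower_plus, Rpower_1 by auto.
        field. lra.
    + rewrite nnpow_nonpos by lra. unfold Rdiv. rewrite Rmult_0_l, Rabs_R0; auto.
  - rewrite nnpow_Rpower by lra.
    apply (is_derive_ext_loc (fun w => Rpower w r)).
    + apply locally_Rabs. exists y; split; auto. intros z Hz. apply Rabs_def2 in Hz.
      rewrite nnpow_Rpower; auto; lra.
    + apply is_derive_Reals, derivable_pt_lim_power; auto.
Qed.

Definition clamp (a b z : R) := Rmax a (Rmin b z).

Lemma clamp_in a b z : a <= b -> a <= clamp a b z <= b.
Proof. intros. unfold clamp, Rmax, Rmin. repeat destruct Rle_dec; lra. Qed.

Lemma clamp_id a b z : a <= z <= b -> clamp a b z = z.
Proof. intros. unfold clamp, Rmax, Rmin. repeat destruct Rle_dec; lra. Qed.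

Lemma clamp_lipschitz a b y z : a <= b -> Rabs (clamp a b y - clamp a b z) <= Rabs (y - z).
Proof.
  intros. unfold clamp, Rmax, Rmin. repeat destruct Rle_dec;
  repeat match goal with |- context [Rabs ?t] => destruct (Rcase_abs t) as [?|?];
    [rewrite (Rabs_left t) by lra | rewrite (Rabs_right t) by lra] end; lra.
Qed.

(* Composing with [clamp a b] turns continuity within [a,b] into continuity on R. *)
Lemma ex_RInt_cont_within a b f : a <= b -> cont_within (fun z => a <= z <= b) f -> ex_RInt f a b.
Proof.
  intros Hab Hc.
  apply (ex_RInt_ext (fun z => f (clamp a b z))).
  { intros z Hz. rewrite Rmin_left, Rmax_right in Hz by lra. rewrite clamp_id; lra. }
  apply (@ex_RInt_continuous R_CompleteNormedModule). intros z _.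
  apply continuous_Reps. intros e He.
  destruct (Hc (clamp a b z) (clamp_in a b z Hab) e He) as [d [Hd H]].
  exists d; split; auto. intros y Hy. apply H; [apply clamp_in; auto|].
  eapply Rle_lt_trans; [apply clamp_lipschitz|]; auto.
Qed.

Lemma cont_within_sub f a b c d : cont_within (fun z => a <= z <= b) f ->
  a <= c -> d <= b -> cont_within (fun z => c <= z <= d) f.
Proof.
  intros H Hac Hdb z Hz e He. destruct (H z ltac:(lra) e He) as [dd [Hd H']].
  exists dd; split; auto. intros y Hy. apply H'. lra.
Qed.

Lemma ex_RInt_continuous_on (f : R -> R) a b : a <= b ->
  (forall z, a <= z <= b -> continuous f z) -> ex_RInt f a b.
Proof.
  intros Hab H. apply (@ex_RInt_continuous R_CompleteNormedModule).
  intros z Hz. rewrite Rmin_left, Rmax_right in Hz by lra. apply H; auto.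
Qed.

(* Coquelicot states these with the module operations [plus], [scal], [opp],
   which do not match [Rplus], [Rmult], [Ropp] syntactically. *)
Lemma RInt_Rplus f g a b : ex_RInt f a b -> ex_RInt g a b ->
  RInt (fun x => f x + g x) a b = RInt f a b + RInt g a b.
Proof. intros. exact (RInt_plus f g a b H H0). Qed.

Lemma RInt_Rmult f k a b : ex_RInt f a b -> RInt (fun x => k * f x) a b = k * RInt f a b.
Proof. intros. exact (RInt_scal f a b k H). Qed.

Lemma RInt_Ropp f a b : ex_RInt f a b -> RInt (fun x => - f x) a b = - RInt f a b.
Proof. intros. exact (RInt_opp f a b H). Qed.

Lemma RInt_Rconst k a b : RInt (fun _ => k) a b = (b - a) * k.
Proof. rewrite (RInt_const (V:=R_CompleteNormedModule)). reflexivity. Qed.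

Lemma ex_RInt_Rplus (f g : R -> R) a b : ex_RInt f a b -> ex_RInt g a b ->
  ex_RInt (fun x => f x + g x) a b.
Proof. intros H H'. exact (ex_RInt_plus f g a b H H'). Qed.

Lemma ex_RInt_Rmult (f : R -> R) k a b : ex_RInt f a b -> ex_RInt (fun x => k * f x) a b.
Proof. intros H. exact (ex_RInt_scal f a b k H). Qed.

Lemma ex_RInt_Ropp (f : R -> R) a b : ex_RInt f a b -> ex_RInt (fun x => - f x) a b.
Proof. intros H. exact (ex_RInt_opp f a b H). Qed.

Lemma RInt01_RInt f : ex_RInt f 0 1 -> RInt01 f = RInt f 0 1.
Proof.
  intros H. unfold RInt01.
  destruct (excluded_middle_informative (inhabited (Riemann_integrable f 0 1))) as [Hi|Hn].
  - rewrite (RInt_Reals f 0 1 (epsilon Hi (fun _ => True))). reflexivity.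
  - exfalso. apply Hn. constructor. apply ex_RInt_Reals_0. auto.
Qed.

Lemma cont2_slice u t : cont2_on closed_dom u -> 0 <= t -> cont_within I01 (u t).
Proof.
  intros Hu Ht z Hz e He. destruct (Hu t z (conj Ht Hz) e He) as [d [Hd H]].
  exists d; split; auto. intros y Hy Hyz. apply H; auto.
  - split; auto.
  - rewrite Rminus_diag, Rabs_R0; auto.
Qed.

Lemma cont2_comp u f : cont2_on closed_dom u -> (forall y, continuous f y) ->
  cont2_on closed_dom (fun s z => f (u s z)).
Proof.
  intros Hu Hf t z Hd e He.
  destruct (proj1 (continuous_Reps f (u t z)) (Hf _) e He) as [d1 [Hd1 H1]].
  destruct (Hu t z Hd d1 Hd1) as [d2 [Hd2 H2]].
  exists d2; split; auto.
Qed.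

Lemma cont2_opp D g : cont2_on D g -> cont2_on D (fun s z => - g s z).
Proof.
  intros H t z Hd e He. destruct (H t z Hd e He) as [d [Hdd H']].
  exists d; split; auto. intros.
  replace (- g t' z' - - g t z) with (- (g t' z' - g t z)) by ring.
  rewrite Rabs_Ropp. auto.
Qed.

Lemma ex_RInt_cont2_slice g t : cont2_on closed_dom g -> 0 <= t -> ex_RInt (g t) 0 1.
Proof. intros Hg Ht. apply ex_RInt_cont_within; [lra|]. apply cont2_slice; auto. Qed.

Section UniformInZ.
Variables (g : R -> R -> R) (t0 e : R).
Hypothesis Hg : cont2_on closed_dom g.
Hypothesis Ht0 : 0 <= t0.
Hypothesis He : 0 < e.

Lemma cont2_local_uniform m : 0 <= m <= 1 -> exists d, 0 < d /\ forall s z, 0 <= s ->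
  Rabs (s - t0) < d -> 0 <= z <= 1 -> Rabs (z - m) < d -> Rabs (g s z - g t0 z) < e.
Proof.
  intros Hm. destruct (Hg t0 m (conj Ht0 Hm) (e/2)) as [d [Hd H]]; [lra|].
  exists d; split; auto. intros s z Hs Hst Hz Hzm.
  assert (A1 := H s z (conj Hs Hz) Hst Hzm).
  assert (A2 := H t0 z (conj Ht0 Hz) ltac:(rewrite Rminus_diag, Rabs_R0; auto) Hzm).
  replace (g s z - g t0 z) with ((g s z - g t0 m) - (g t0 z - g t0 m)) by ring.
  eapply Rle_lt_trans; [apply Rabs_triang|]. rewrite Rabs_Ropp. lra.
Qed.

Let uniform_upto y := 0 <= y <= 1 /\ exists r, 0 < r /\ forall s z, 0 <= s ->
  Rabs (s - t0) < r -> 0 <= z <= y -> Rabs (g s z - g t0 z) < e.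

(* The supremum [m] of the [y] for which uniformity holds on [[0,y]] is [1]:
   the local uniformity at [m] extends it past [m] otherwise. *)
Lemma cont2_uniform_in_z : exists r, 0 < r /\ forall s z, 0 <= s ->
  Rabs (s - t0) < r -> 0 <= z <= 1 -> Rabs (g s z - g t0 z) < e.
Proof.
  assert (H0 : uniform_upto 0).
  { destruct (cont2_local_uniform 0) as [d [Hd H]]; [lra|]. split; [lra|].
    exists d; split; auto. intros s z Hs Hst Hz. apply H; auto; [lra|].
    replace (z - 0) with 0 by lra. rewrite Rabs_R0; auto. }
  assert (Hb : bound uniform_upto) by (exists 1; intros y [Hy _]; lra).
  destruct (completeness uniform_upto Hb (ex_intro _ 0 H0)) as [m [Hub Hlub]].
  assert (Hm : 0 <= m <= 1).
  { split; [apply Hub; auto|]. apply Hlub. intros y [Hy _]; lra. }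
  destruct (cont2_local_uniform m Hm) as [d [Hd Hl]].
  assert (Hy : exists y, uniform_upto y /\ m - d < y).
  { apply NNPP. intros Hn. assert (m <= m - d); [|lra]. apply Hlub. intros y Py.
    destruct (Rle_dec y (m - d)); auto. exfalso. apply Hn. exists y; split; auto; lra. }
  destruct Hy as [y [[Hy [r [Hr Hyr]]] Hym]].
  assert (Hym' : y <= m) by (apply Hub; split; [lra|exists r; split; auto]).
  set (m' := Rmin (m + d/2) 1).
  assert (Hm' : uniform_upto m').
  { split; [unfold m', Rmin; destruct Rle_dec; lra|].
    exists (Rmin r d). split; [apply Rmin_pos; auto|].
    intros s z Hs Hst Hz.
    assert (Rabs (s - t0) < r) by (eapply Rlt_le_trans; [exact Hst|apply Rmin_l]).
    assert (Rabs (s - t0) < d) by (eapply Rlt_le_trans; [exact Hst|apply Rmin_r]).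
    assert (z <= m + d/2 /\ z <= 1) by (unfold m', Rmin in Hz; destruct Rle_dec; lra).
    destruct (Rle_dec z y); [apply Hyr; auto; lra|].
    apply Hl; auto; [lra|]. apply Rabs_def1; lra. }
  assert (m' <= m) by (apply Hub; auto).
  assert (Hm1 : m' = 1) by (unfold m', Rmin in *; destruct Rle_dec; lra).
  rewrite Hm1 in Hm'. destruct Hm' as [_ [r' [Hr' H']]].
  exists r'; split; auto.
Qed.

End UniformInZ.

Lemma continuity_2d_pt_of_open g t z : open_dom t z -> cont2_on open_dom g ->
  continuity_2d_pt g t z.
Proof.
  intros [Ht Hz] Hg eps. destruct (Hg t z (conj Ht Hz) eps (cond_pos eps)) as [d [Hd H]].
  set (d' := Rmin d (Rmin t (Rmin z (1 - z)))).
  assert (Hd' : 0 < d') by (unfold d'; repeat apply Rmin_pos; lra).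
  exists (mkposreal d' Hd'). simpl. intros u v Hu Hv.
  assert (d' <= d) by apply Rmin_l.
  assert (d' <= t) by (unfold d'; eapply Rle_trans; [apply Rmin_r|apply Rmin_l]).
  assert (d' <= z /\ d' <= 1 - z) as [].
  { unfold d'. split; (eapply Rle_trans; [apply Rmin_r|]; eapply Rle_trans; [apply Rmin_r|]).
    apply Rmin_l. apply Rmin_r. }
  apply Rabs_def2 in Hu. apply Rabs_def2 in Hv.
  apply H; [split| |]; try lra; apply Rabs_def1; lra.
Qed.

Lemma continuity_2d_pt_of_closed g t z : open_dom t z -> cont2_on closed_dom g ->
  continuity_2d_pt g t z.
Proof.
  intros Ho Hg. apply continuity_2d_pt_of_open; auto. intros t' z' [H1 H2] e He.
  destruct (Hg t' z' ltac:(split; lra) e He) as [d [Hd H]].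
  exists d; split; auto. intros t'' z'' [A1 A2] B1 B2. apply H; auto. split; lra.
Qed.

Lemma continuous_of_continuity_2d_pt g t z : continuity_2d_pt g t z -> continuous (g t) z.
Proof.
  intros H. apply continuous_Reps. intros e He. destruct (H (mkposreal e He)) as [d Hd].
  exists d; split; [apply cond_pos|]. intros y Hy. apply Hd; auto.
  rewrite Rminus_diag, Rabs_R0. apply cond_pos.
Qed.

(** * The truncated power [((y - K)₊)^p] and its derivatives *)

Section Excess.
Variables (p K : R).
Hypothesis Hp : 2 < p.

Definition excess y := nnpow (y - K) p.
Definition excess' y := p * nnpow (y - K) (p - 1).
Definition excess'' y := p * (p - 1) * nnpow (y - K) (p - 2).

Lemma is_derive_excess y : is_derive excess y (excess' y).
Proof.
  unfold excess, excess'.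
  assert (H := is_derive_comp (fun w => nnpow w p) (fun y => y - K) y _ 1
     (is_derive_nnpow p (y - K) ltac:(lra))).
  apply (is_derive_eq _ _ _ _ (H ltac:(auto_derive; auto; ring))).
  unfold scal; simpl; unfold mult; simpl; ring.
Qed.

Lemma is_derive_excess' y : is_derive excess' y (excess'' y).
Proof.
  unfold excess', excess''.
  assert (H := is_derive_comp (fun w => nnpow w (p-1)) (fun y => y - K) y _ 1
     (is_derive_nnpow (p-1) (y - K) ltac:(lra))).
  apply (is_derive_eq _ _ _ _ (is_derive_scal _ _ p _ (H ltac:(auto_derive; auto; ring)))).
  unfold scal; simpl; unfold mult; simpl. replace (p - 1 - 1) with (p - 2) by ring. ring.
Qed.

Lemma continuous_nnpow_shift r y : 0 < r -> continuous (fun y => nnpow (y - K) r) y.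
Proof.
  intros Hr. apply (continuous_comp (fun y => y - K) (fun w => nnpow w r)).
  - apply (ex_derive_continuous (fun y => y - K)). auto_derive; auto.
  - apply continuous_nnpow; auto.
Qed.

Lemma continuous_excess y : continuous excess y.
Proof. apply continuous_nnpow_shift; lra. Qed.

Lemma continuous_excess' y : continuous excess' y.
Proof.
  apply (continuous_scal_r p (fun y => nnpow (y - K) (p-1))).
  apply continuous_nnpow_shift; lra.
Qed.

Lemma continuous_excess'' y : continuous excess'' y.
Proof.
  apply (continuous_scal_r (p * (p-1)) (fun y => nnpow (y - K) (p-2))).
  apply continuous_nnpow_shift; lra.
Qed.

Lemma excess_below y : y <= K -> excess y = 0 /\ excess' y = 0 /\ excess'' y = 0.
Proof.
  intros. unfold excess, excess', excess''. rewrite !nnpow_nonpos by lra. repeat split; ring.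
Qed.

Lemma excess_ge0 y : 0 <= excess y.
Proof. apply nnpow_ge0. Qed.

(* With [q = y - K > 0] and [Q = q^(p-2)] the claim reads
   [Q (q²/2 + p(p-1) w²/4 + (z - 1/2) p w q) >= 0]; since
   [(z - 1/2) w >= -|w|/2], the bracket is at least
   [(q - p|w|/2)²/2 + p(p-2) w²/8]. *)
Lemma excess_young y w z : 0 <= z <= 1 ->
  - ((z - 1/2) * (w * excess' y)) <= 1/2 * excess y + 1/4 * (excess'' y * w * w).
Proof.
  intros Hz. destruct (Rle_dec y K) as [Hy|Hy].
  - destruct (excess_below y Hy) as [-> [-> ->]]. lra.
  - unfold excess, excess', excess''. set (q := y - K). assert (Hq : 0 < q) by (unfold q; lra).
    rewrite !nnpow_Rpower by auto.
    set (Q := Rpower q (p - 2)). assert (HQ : 0 < Q) by apply Rpower_gt0.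
    replace (Rpower q p) with (Q * q * q).
    2:{ unfold Q. replace p with (((p-2) + 1) + 1) at 2 by ring.
        rewrite !Rpower_plus, Rpower_1; auto. }
    replace (Rpower q (p-1)) with (Q * q).
    2:{ unfold Q. replace (p - 1) with ((p-2) + 1) by ring. rewrite Rpower_plus, Rpower_1; auto. }
    assert (Hw : Rabs w * Rabs w = w * w) by (rewrite <- Rabs_mult; apply Rabs_right; nra).
    assert (Hzw : - (1/2) * Rabs w <= (z - 1/2) * w).
    { assert (H : Rabs ((z - 1/2) * w) <= 1/2 * Rabs w).
      { rewrite Rabs_mult. apply Rmult_le_compat_r; [apply Rabs_pos|]. apply Rabs_le; lra. }
      apply Rabs_le_between in H. lra. }
    assert (Hzwpq : - (1/2) * Rabs w * p * q <= (z - 1/2) * w * p * q).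
    { apply Rmult_le_compat_r; [lra|]. apply Rmult_le_compat_r; lra. }
    assert (Hsq : 0 <= 1/2 * (q*q) - 1/2 * (Rabs w * p * q) + p * p * (w * w) / 8).
    { rewrite <- Hw. assert (0 <= (q - p * Rabs w / 2) * (q - p * Rabs w / 2)) by apply Rle_0_sqr.
      lra. }
    assert (0 <= (w*w)*(p*(p-2))) by (apply Rmult_le_pos; nra).
    assert (0 <= (1/2) * q * q + (1/4) * p * (p-1) * w * w + (z - 1/2) * w * p * q) by lra.
    nra.
Qed.

End Excess.

(** * Decay of the truncated energy along the heat flow *)

Definition heat_solution (a : R) (u ut uz uzz : R -> R -> R) : Prop :=
  forall t z, open_dom t z ->
    derivable_pt_lim (fun s => u s z) t (ut t z) /\
    derivable_pt_lim (fun w => u t w) z (uz t z) /\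
    derivable_pt_lim (fun w => uz t w) z (uzz t z) /\ ut t z = a * uzz t z.

Lemma heat_solution_opp a u ut uz uzz : heat_solution a u ut uz uzz ->
  heat_solution a (fun s z => - u s z) (fun s z => - ut s z)
    (fun s z => - uz s z) (fun s z => - uzz s z).
Proof.
  intros HD t z Ho. destruct (HD t z Ho) as [D1 [D2 [D3 D4]]].
  split; [|split; [|split]]; try (apply derivable_pt_lim_opp; auto).
  rewrite D4. ring.
Qed.

Definition energy (p K : R) (u : R -> R -> R) (s : R) : R :=
  RInt (fun z => excess p K (u s z)) 0 1.

Section Energy.
Variables (a p K : R) (u ut uz uzz : R -> R -> R).
Hypothesis Ha : 0 < a.
Hypothesis Hp : 2 < p.
Hypothesis HC : cont2_on closed_dom u.
Hypothesis HD : heat_solution a u ut uz uzz.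
Hypothesis Hut : cont2_on open_dom ut.
Hypothesis Huz : cont2_on open_dom uz.
Hypothesis Huzz : cont2_on open_dom uzz.

Lemma cont2_excess : cont2_on closed_dom (fun s z => excess p K (u s z)).
Proof. apply cont2_comp; auto. intros. apply continuous_excess; lra. Qed.

Lemma ex_RInt_excess s c d : 0 <= s -> 0 <= c <= d -> d <= 1 ->
  ex_RInt (fun z => excess p K (u s z)) c d.
Proof.
  intros Hs Hcd Hd. apply ex_RInt_cont_within; [lra|].
  apply (cont_within_sub _ 0 1); try lra. apply (cont2_slice (fun s z => excess p K (u s z))); auto.
  apply cont2_excess.
Qed.

Lemma energy_ge0 s : 0 <= s -> 0 <= energy p K u s.
Proof.
  intros Hs. apply RInt_ge_0; [lra| |intros; apply excess_ge0].
  apply ex_RInt_excess; lra.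
Qed.

Lemma energy_inner t0 eta rho : 0 < eta < 1/2 ->
  (forall s z, 0 <= s -> Rabs (s - t0) < rho -> 0 <= z <= 1 ->
     (z <= eta \/ 1 - eta <= z) -> u s z < K) ->
  forall s, 0 <= s -> Rabs (s - t0) < rho ->
  energy p K u s = RInt (fun z => excess p K (u s z)) eta (1 - eta).
Proof.
  intros He Hb s Hs Hst. unfold energy. set (f := fun z => excess p K (u s z)).
  assert (E1 : ex_RInt f 0 eta) by (apply ex_RInt_excess; lra).
  assert (E2 : ex_RInt f eta (1-eta)) by (apply ex_RInt_excess; lra).
  assert (E3 : ex_RInt f (1-eta) 1) by (apply ex_RInt_excess; lra).
  assert (Hzero : forall c d, 0 <= c <= d -> d <= 1 ->
    (forall z, c <= z <= d -> z <= eta \/ 1 - eta <= z) -> RInt f c d = 0).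
  { intros c d Hc Hd Hcd. transitivity (RInt (fun _ => 0) c d).
    - apply RInt_ext. intros z Hz. rewrite Rmin_left, Rmax_right in Hz by lra.
      apply excess_below. left. apply Hb; auto; [lra|]. apply Hcd; lra.
    - rewrite RInt_Rconst. apply Rmult_0_r. }
  rewrite <- (RInt_Chasles f 0 eta 1 E1 (ex_RInt_Chasles _ _ _ _ E2 E3)).
  rewrite <- (RInt_Chasles f eta (1-eta) 1 E2 E3).
  change (RInt f 0 eta + (RInt f eta (1 - eta) + RInt f (1 - eta) 1) = RInt f eta (1 - eta)).
  rewrite (Hzero 0 eta), (Hzero (1-eta) 1); try lra; intros; lra.
Qed.

Lemma is_derive_excess_t s z : open_dom s z ->
  is_derive (fun w => excess p K (u w z)) s (ut s z * excess' p K (u s z)).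
Proof.
  intros Ho. destruct (HD s z Ho) as [D1 _].
  apply (is_derive_comp (excess p K) (fun w => u w z) s _ _ (is_derive_excess p K Hp _)).
  apply is_derive_Reals; auto.
Qed.

Section Dissipation.
Local Opaque excess excess' excess''.
Variables (t0 eta : R).
Hypothesis Ht0 : 0 < t0.
Hypothesis He : 0 < eta < 1/2.
Hypothesis Hb : forall z, 0 <= z <= 1 -> (z <= eta \/ 1 - eta <= z) -> u t0 z < K.

Lemma continuity_2d_solution z : eta <= z <= 1 - eta ->
  continuity_2d_pt u t0 z /\ continuity_2d_pt ut t0 z /\
  continuity_2d_pt uz t0 z /\ continuity_2d_pt uzz t0 z.
Proof.
  intros Hz. assert (Ho : open_dom t0 z) by (split; lra).
  repeat split; [apply continuity_2d_pt_of_closed|apply continuity_2d_pt_of_open..]; auto.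
Qed.

Ltac continuous_integrand G :=
  intros z Hz; try rewrite Rmin_left, Rmax_right in Hz by lra;
  apply (continuous_of_continuity_2d_pt G);
  destruct (continuity_2d_solution z Hz) as [C1 [C2 [C3 C4]]];
  repeat first [ assumption | apply continuity_2d_pt_id2 | apply continuity_2d_pt_const
    | apply continuity_2d_pt_plus | apply continuity_2d_pt_minus | apply continuity_2d_pt_mult
    | apply continuity_1d_2d_pt_comp; [apply continuity_pt_filterlim;
        first [apply continuous_excess | apply continuous_excess' | apply continuous_excess'']; lra|] ].

Lemma excess_vanishes_at_ends : excess p K (u t0 eta) = 0 /\ excess' p K (u t0 eta) = 0 /\
  excess p K (u t0 (1 - eta)) = 0 /\ excess' p K (u t0 (1 - eta)) = 0.
Proof.
  destruct (excess_below p K (u t0 eta)) as [A1 [A2 _]]; [left; apply Hb; lra|].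
  destruct (excess_below p K (u t0 (1 - eta))) as [B1 [B2 _]]; [left; apply Hb; lra|].
  auto.
Qed.

Lemma RInt_excess_flux :
  RInt (fun z => uz t0 z * excess'' p K (u t0 z) * uz t0 z + excess' p K (u t0 z) * uzz t0 z)
    eta (1 - eta) = 0.
Proof.
  apply is_RInt_unique.
  replace 0 with (minus (excess' p K (u t0 (1 - eta)) * uz t0 (1 - eta))
                        (excess' p K (u t0 eta) * uz t0 eta)).
  - apply (is_RInt_derive (fun z => excess' p K (u t0 z) * uz t0 z)).
    + intros z Hz. rewrite Rmin_left, Rmax_right in Hz by lra.
      destruct (HD t0 z ltac:(split; lra)) as [_ [D2 [D3 _]]].
      assert (A := is_derive_comp (excess' p K) (u t0) z _ _ (is_derive_excess' p K Hp _)
                     (proj2 (is_derive_Reals _ _ _) D2)).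
      exact (is_derive_mult _ _ z _ _ A (proj2 (is_derive_Reals _ _ _) D3) Rmult_comm).
    + continuous_integrand (fun s v => uz s v * excess'' p K (u s v) * uz s v
                                       + excess' p K (u s v) * uzz s v).
  - destruct excess_vanishes_at_ends as [_ [-> [_ ->]]].
    unfold minus, plus, opp; simpl. ring.
Qed.

Lemma RInt_excess_weighted :
  RInt (fun z => excess p K (u t0 z) + (z - 1/2) * (uz t0 z * excess' p K (u t0 z)))
    eta (1 - eta) = 0.
Proof.
  apply is_RInt_unique.
  replace 0 with (minus ((1 - eta - 1/2) * excess p K (u t0 (1 - eta)))
                        ((eta - 1/2) * excess p K (u t0 eta))).
  - apply (is_RInt_derive (fun z => (z - 1/2) * excess p K (u t0 z))).
    + intros z Hz. rewrite Rmin_left, Rmax_right in Hz by lra.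
      destruct (HD t0 z ltac:(split; lra)) as [_ [D2 _]].
      assert (A0 : is_derive (fun z => z - 1/2) z 1) by (auto_derive; auto; ring).
      assert (A := is_derive_comp (excess p K) (u t0) z _ _ (is_derive_excess p K Hp _)
                     (proj2 (is_derive_Reals _ _ _) D2)).
      apply (is_derive_eq _ _ _ _ (is_derive_mult _ _ z _ _ A0 A Rmult_comm)).
      unfold plus, mult, scal; simpl; unfold mult; simpl. ring.
    + continuous_integrand (fun s v => excess p K (u s v) + (v - 1/2) * (uz s v * excess' p K (u s v))).
  - destruct excess_vanishes_at_ends as [-> [_ [-> _]]].
    unfold minus, plus, opp; simpl. ring.
Qed.

(* With [φ = excess p K] and [I1 = ∫ φ], [I2 = ∫ φ'' u_z²], [I3 = ∫ φ' u_zz],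
   [I4 = ∫ (z - 1/2) φ' u_z]:
   [I2 + I3 = 0], [I1 + I4 = 0] and, by [excess_young], [-I4 <= I1/2 + I2/4];
   hence [a I3 <= -2a I1]. *)
Lemma energy_dissipation :
  RInt (fun z => ut t0 z * excess' p K (u t0 z)) eta (1 - eta)
  <= - (2 * a) * RInt (fun z => excess p K (u t0 z)) eta (1 - eta).
Proof.
  set (b := 1 - eta). assert (Hab : eta <= b) by (unfold b; lra).
  set (F1 := fun z => excess p K (u t0 z)).
  set (F2 := fun z => uz t0 z * excess'' p K (u t0 z) * uz t0 z).
  set (F3 := fun z => excess' p K (u t0 z) * uzz t0 z).
  set (F4 := fun z => (z - 1/2) * (uz t0 z * excess' p K (u t0 z))).
  assert (E1 : ex_RInt F1 eta b)
    by (apply ex_RInt_continuous_on; auto; continuous_integrand (fun s v => excess p K (u s v))).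
  assert (E2 : ex_RInt F2 eta b)
    by (apply ex_RInt_continuous_on; auto;
        continuous_integrand (fun s v => uz s v * excess'' p K (u s v) * uz s v)).
  assert (E3 : ex_RInt F3 eta b)
    by (apply ex_RInt_continuous_on; auto;
        continuous_integrand (fun s v => excess' p K (u s v) * uzz s v)).
  assert (E4 : ex_RInt F4 eta b)
    by (apply ex_RInt_continuous_on; auto;
        continuous_integrand (fun s v => (v - 1/2) * (uz s v * excess' p K (u s v)))).
  assert (I23 : RInt F2 eta b + RInt F3 eta b = 0)
    by (rewrite <- RInt_Rplus by auto; apply RInt_excess_flux).
  assert (I14 : RInt F1 eta b + RInt F4 eta b = 0)
    by (rewrite <- RInt_Rplus by auto; apply RInt_excess_weighted).
  assert (Iyoung : - RInt F4 eta b <= 1/2 * RInt F1 eta b + 1/4 * RInt F2 eta b).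
  { rewrite <- RInt_Ropp, <- !RInt_Rmult, <- RInt_Rplus by
      (auto using ex_RInt_Rmult, ex_RInt_Rplus).
    apply RInt_le; auto using ex_RInt_Ropp, ex_RInt_Rplus, ex_RInt_Rmult.
    intros z Hz. unfold F1, F2, F4.
    replace (uz t0 z * excess'' p K (u t0 z) * uz t0 z)
      with (excess'' p K (u t0 z) * uz t0 z * uz t0 z) by ring.
    apply excess_young; unfold b in Hz; lra. }
  assert (Iheat : RInt (fun z => ut t0 z * excess' p K (u t0 z)) eta b = a * RInt F3 eta b).
  { rewrite <- RInt_Rmult by auto. apply RInt_ext. intros z Hz.
    rewrite Rmin_left, Rmax_right in Hz by auto.
    destruct (HD t0 z ltac:(split; unfold b in Hz; lra)) as [_ [_ [_ ->]]].
    unfold F3. rewrite Rmult_assoc, (Rmult_comm (uzz t0 z)). reflexivity. }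
  fold b. rewrite Iheat. fold F1. nra.
Qed.

End Dissipation.

Lemma energy_right_continuous_at_0 e : 0 < e ->
  exists s0, 0 < s0 /\ forall s, 0 <= s < s0 -> energy p K u s <= energy p K u 0 + e.
Proof.
  intros He.
  destruct (cont2_uniform_in_z (fun s z => excess p K (u s z)) 0 e cont2_excess ltac:(lra) He)
    as [r [Hr H]].
  exists r; split; auto. intros s Hs. unfold energy.
  assert (E0 := ex_RInt_excess 0 0 1 ltac:(lra) ltac:(lra) ltac:(lra)).
  assert (Es := ex_RInt_excess s 0 1 ltac:(lra) ltac:(lra) ltac:(lra)).
  replace (RInt (fun z => excess p K (u 0 z)) 0 1 + e)
    with (RInt (fun z => excess p K (u 0 z) + e) 0 1)
    by (rewrite RInt_Rplus, RInt_Rconst by auto using ex_RInt_const; lra).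
  apply RInt_le; [lra|auto|apply ex_RInt_Rplus; auto using ex_RInt_const|].
  intros z Hz. assert (A := H s z ltac:(lra) ltac:(rewrite Rminus_0_r, Rabs_right; lra) ltac:(lra)).
  apply Rabs_def2 in A. lra.
Qed.

Lemma is_derive_inner_energy t0 eta : 0 < t0 -> 0 < eta < 1/2 ->
  is_derive (fun s => RInt (fun z => excess p K (u s z)) eta (1 - eta)) t0
    (RInt (fun z => ut t0 z * excess' p K (u t0 z)) eta (1 - eta)).
Proof.
  intros Ht He. set (f := fun s z => excess p K (u s z)).
  assert (Hf : forall s z, 0 < s -> 0 < z < 1 ->
    is_derive (fun w => f w z) s (ut s z * excess' p K (u s z)))
    by (intros; apply is_derive_excess_t; split; lra).
  apply (is_derive_eq _ _ (RInt (fun z => Derive (fun w => f w z) t0) eta (1 - eta))).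
  - apply is_derive_RInt_param.
    + apply locally_Rabs. exists t0; split; [lra|]. intros s Hs z Hz.
      rewrite Rmin_left, Rmax_right in Hz by lra. apply Rabs_def2 in Hs.
      eexists. apply Hf; lra.
    + intros z Hz. rewrite Rmin_left, Rmax_right in Hz by lra.
      apply (continuity_2d_pt_ext_loc (fun s v => ut s v * excess' p K (u s v))).
      * assert (Hm : 0 < Rmin t0 eta) by (apply Rmin_pos; lra).
        exists (mkposreal _ Hm). simpl. intros s v Hs Hv.
        assert (Rmin t0 eta <= t0) by apply Rmin_l.
        assert (Rmin t0 eta <= eta) by apply Rmin_r.
        apply Rabs_def2 in Hs. apply Rabs_def2 in Hv.
        symmetry. apply is_derive_unique, Hf; lra.
      * apply continuity_2d_pt_mult.
        -- apply continuity_2d_pt_of_open; auto. split; lra.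
        -- apply continuity_1d_2d_pt_comp.
           ++ apply continuity_pt_filterlim, continuous_excess'; lra.
           ++ apply continuity_2d_pt_of_closed; auto. split; lra.
    + apply locally_Rabs. exists t0; split; [lra|]. intros s Hs. apply Rabs_def2 in Hs.
      apply ex_RInt_excess; lra.
  - apply RInt_ext. intros z Hz. rewrite Rmin_left, Rmax_right in Hz by lra.
    apply is_derive_unique, Hf; lra.
Qed.

Section BelowLevel.
Variable T : R.
Hypothesis HT : 0 <= T.
Hypothesis HB : forall s, 0 <= s <= T -> u s 0 < K /\ u s 1 < K.

Lemma below_level_near_boundary t0 : 0 <= t0 <= T -> exists eta rho, 0 < eta < 1/2 /\ 0 < rho /\
  forall s z, 0 <= s -> Rabs (s - t0) < rho -> 0 <= z <= 1 ->
    (z <= eta \/ 1 - eta <= z) -> u s z < K.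
Proof.
  intros Ht. destruct (HB t0 Ht) as [H0 H1].
  destruct (HC t0 0 ltac:(split; lra) (K - u t0 0) ltac:(lra)) as [d0 [Hd0 A0]].
  destruct (HC t0 1 ltac:(split; lra) (K - u t0 1) ltac:(lra)) as [d1 [Hd1 A1]].
  set (m := Rmin d0 (Rmin d1 (1/2))).
  assert (Hm : 0 < m) by (unfold m; repeat apply Rmin_pos; lra).
  assert (m <= d0) by apply Rmin_l.
  assert (m <= d1) by (unfold m; eapply Rle_trans; [apply Rmin_r|apply Rmin_l]).
  assert (m <= 1/2) by (unfold m; eapply Rle_trans; [apply Rmin_r|apply Rmin_r]).
  exists (m/2), m. split; [lra|]. split; auto.
  intros s z Hs Hst Hz [Hz1|Hz1].
  - assert (B := A0 s z (conj Hs Hz) ltac:(lra) ltac:(apply Rabs_def1; lra)).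
    apply Rabs_def2 in B. lra.
  - assert (B := A1 s z (conj Hs Hz) ltac:(lra) ltac:(apply Rabs_def1; lra)).
    apply Rabs_def2 in B. lra.
Qed.

(* Near [t0] the energy is an integral over a fixed [[eta, 1 - eta]]. *)
Lemma is_derive_energy t0 : 0 < t0 <= T -> exists eta, 0 < eta < 1/2 /\
  (forall z, 0 <= z <= 1 -> (z <= eta \/ 1 - eta <= z) -> u t0 z < K) /\
  energy p K u t0 = RInt (fun z => excess p K (u t0 z)) eta (1 - eta) /\
  is_derive (energy p K u) t0 (RInt (fun z => ut t0 z * excess' p K (u t0 z)) eta (1 - eta)).
Proof.
  intros Ht. destruct (below_level_near_boundary t0 ltac:(lra)) as [eta [rho [He [Hr Hb]]]].
  assert (Ht0 : Rabs (t0 - t0) < rho) by (rewrite Rminus_diag, Rabs_R0; auto).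
  exists eta. split; [auto|]. split; [intros; apply Hb; auto; lra|].
  split; [apply (energy_inner t0 eta rho); auto; lra|].
  apply (is_derive_ext_loc (fun s => RInt (fun z => excess p K (u s z)) eta (1 - eta))).
  - apply locally_Rabs. exists (Rmin rho t0). split; [apply Rmin_pos; lra|].
    intros s Hs. assert (Rmin rho t0 <= rho) by apply Rmin_l.
    assert (Rmin rho t0 <= t0) by apply Rmin_r.
    symmetry. apply Rabs_def2 in Hs. apply (energy_inner t0 eta rho); auto; try lra.
    apply Rabs_def1; lra.
  - apply is_derive_inner_energy; lra.
Qed.

Let weighted_energy s := exp (2 * a * s) * energy p K u s.

Lemma weighted_energy_derivative_nonpos s : 0 < s <= T ->
  exists dE, is_derive weighted_energy s dE /\ dE <= 0.
Proof.
  intros Hs. destruct (is_derive_energy s Hs) as [eta [He [Hb [Veq Hd]]]].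
  assert (Hbd := energy_dissipation s eta ltac:(lra) He Hb).
  assert (He' : is_derive (fun s => exp (2 * a * s)) s (2 * a * exp (2 * a * s)))
    by (auto_derive; auto; ring).
  eexists. split; [exact (is_derive_mult _ _ s _ _ He' Hd Rmult_comm)|].
  unfold plus, mult; simpl; unfold plus, mult; simpl.
  rewrite Veq. assert (0 < exp (2 * a * s)) by apply exp_pos. nra.
Qed.

Lemma weighted_energy_nonincreasing s : 0 < s < T -> weighted_energy T <= weighted_energy s.
Proof.
  intros Hs.
  assert (Hd : forall r, 0 < r <= T ->
    is_derive weighted_energy r (Derive weighted_energy r) /\ Derive weighted_energy r <= 0).
  { intros r Hr. destruct (weighted_energy_derivative_nonpos r Hr) as [dE [H1 H2]].
    rewrite (is_derive_unique _ _ _ H1). auto. }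
  destruct (MVT_gen weighted_energy s T (Derive weighted_energy)) as [c [Hc Heq]].
  - intros r Hr. rewrite Rmin_left, Rmax_right in Hr by lra. apply Hd; lra.
  - intros r Hr. rewrite Rmin_left, Rmax_right in Hr by lra.
    apply continuity_pt_filterlim, (ex_derive_continuous weighted_energy).
    eexists. apply Hd; lra.
  - rewrite Rmin_left, Rmax_right in Hc by lra.
    assert (Derive weighted_energy c <= 0) by (apply Hd; lra).
    assert (Derive weighted_energy c * (T - s) <= 0) by (apply Rmult_le_0_r; lra).
    lra.
Qed.

Lemma weighted_energy_le_near_0 e : 0 < e ->
  weighted_energy T <= exp (2 * a * e) * (energy p K u 0 + e).
Proof.
  intros He. destruct (Req_dec T 0) as [HT0|HT0].
  { unfold weighted_energy. rewrite HT0, Rmult_0_r, exp_0, Rmult_1_l.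
    assert (1 < exp (2 * a * e)) by (rewrite <- exp_0; apply exp_increasing; nra).
    assert (0 <= energy p K u 0) by (apply energy_ge0; lra). nra. }
  destruct (energy_right_continuous_at_0 e He) as [s0 [Hs0 Hs]].
  set (s := Rmin e (Rmin s0 T) / 2).
  assert (Hm : 0 < Rmin e (Rmin s0 T)) by (repeat apply Rmin_pos; lra).
  assert (Rmin e (Rmin s0 T) <= e) by apply Rmin_l.
  assert (Rmin e (Rmin s0 T) <= s0) by (eapply Rle_trans; [apply Rmin_r|apply Rmin_l]).
  assert (Rmin e (Rmin s0 T) <= T) by (eapply Rle_trans; [apply Rmin_r|apply Rmin_r]).
  apply (Rle_trans _ (weighted_energy s)); [apply weighted_energy_nonincreasing; unfold s; lra|].
  apply Rmult_le_compat; [left; apply exp_pos|apply energy_ge0; unfold s; lra| |].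
  - left. apply exp_increasing. unfold s. nra.
  - apply Hs. unfold s; lra.
Qed.

Lemma energy_decay : energy p K u T <= exp (- (2 * a) * T) * energy p K u 0.
Proof.
  assert (Hlim : weighted_energy T <= energy p K u 0).
  { apply Rnot_lt_le. intros Hlt.
    assert (Hc : continuous (fun e => exp (2 * a * e) * (energy p K u 0 + e)) 0)
      by (apply (ex_derive_continuous (fun e => exp (2 * a * e) * (energy p K u 0 + e)));
          auto_derive; auto).
    destruct (proj1 (continuous_Reps _ _) Hc (weighted_energy T - energy p K u 0))
      as [d [Hd Hdd]]; [lra|].
    assert (A := Hdd (d/2) ltac:(rewrite Rminus_0_r, Rabs_right; lra)).
    rewrite Rmult_0_r, exp_0, Rplus_0_r, Rmult_1_l in A.
    apply Rabs_def2 in A. assert (B := weighted_energy_le_near_0 (d/2) ltac:(lra)). lra. }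
  unfold weighted_energy in Hlim.
  replace (energy p K u T)
    with (exp (- (2 * a) * T) * (exp (2 * a * T) * energy p K u T)).
  - apply Rmult_le_compat_l; [left; apply exp_pos|auto].
  - rewrite <- Rmult_assoc, <- exp_plus. replace (- (2 * a) * T + 2 * a * T) with 0 by ring.
    rewrite exp_0. ring.
Qed.

End BelowLevel.

End Energy.

(** * From the energies to the [L^p] norm *)

Lemma abs_pow_le_excess p K y : 0 < p -> 0 < K ->
  nnpow (Rabs y) p <= Rpower 2 p * (excess p K y + excess p K (- y) + Rpower K p).
Proof.
  intros Hp HK. unfold excess.
  set (M := Rmax (Rmax (y - K) (- y - K)) K).
  assert (HMK : K <= M) by apply Rmax_r.
  assert (HM1 : y - K <= M) by (eapply Rle_trans; [apply Rmax_l|]; apply Rmax_l).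
  assert (HM2 : - y - K <= M) by (eapply Rle_trans; [apply Rmax_r|]; apply Rmax_l).
  assert (Hy : Rabs y <= 2 * M) by (apply Rabs_le; lra).
  apply (Rle_trans _ (nnpow (2 * M) p)); [apply nnpow_le; lra|].
  rewrite nnpow_mult, (nnpow_Rpower 2) by lra.
  apply Rmult_le_compat_l; [left; apply Rpower_gt0|].
  assert (A1 := nnpow_ge0 (y - K) p). assert (A2 := nnpow_ge0 (- y - K) p).
  assert (A3 : 0 < Rpower K p) by apply Rpower_gt0.
  unfold M, Rmax. repeat destruct Rle_dec; try lra; rewrite nnpow_Rpower by lra; lra.
Qed.

Lemma excess_le_abs_pow p K y : 0 <= K -> 0 < p -> excess p K y <= nnpow (Rabs y) p.
Proof.
  intros. apply nnpow_le; auto.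
  destruct (Rcase_abs y); [rewrite Rabs_left|rewrite Rabs_right]; lra.
Qed.

Lemma ex_RInt_abs_pow p g s : 0 < p -> cont2_on closed_dom g -> 0 <= s ->
  ex_RInt (fun z => nnpow (Rabs (g s z)) p) 0 1.
Proof.
  intros Hp Hg Hs. apply (ex_RInt_cont2_slice (fun s z => nnpow (Rabs (g s z)) p)); auto.
  apply (cont2_comp g (fun y => nnpow (Rabs y) p)); auto. intros. apply continuous_nnpow_abs; auto.
Qed.

Lemma energy_le_abs_pow p K g s : 2 < p -> 0 <= K -> cont2_on closed_dom g -> 0 <= s ->
  energy p K g s <= RInt (fun z => nnpow (Rabs (g s z)) p) 0 1.
Proof.
  intros Hp HK Hg Hs. apply RInt_le; [lra|apply ex_RInt_excess; auto; lra| |].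
  - apply ex_RInt_abs_pow; auto; lra.
  - intros. apply excess_le_abs_pow; lra.
Qed.

Lemma abs_pow_le_energies p K g s : 2 < p -> 0 < K -> cont2_on closed_dom g -> 0 <= s ->
  RInt (fun z => nnpow (Rabs (g s z)) p) 0 1 <=
  Rpower 2 p * (energy p K g s + energy p K (fun s z => - g s z) s + Rpower K p).
Proof.
  intros Hp HK Hg Hs.
  assert (Ep := ex_RInt_excess p K g Hp Hg s 0 1 Hs ltac:(lra) ltac:(lra)).
  assert (En := ex_RInt_excess p K _ Hp (cont2_opp _ _ Hg) s 0 1 Hs ltac:(lra) ltac:(lra)).
  set (bound := fun z => Rpower 2 p * (excess p K (g s z) + excess p K (- g s z) + Rpower K p)).
  apply (Rle_trans _ (RInt bound 0 1)).
  - apply RInt_le; [lra|apply ex_RInt_abs_pow; auto; lra| |].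
    + apply ex_RInt_Rmult, ex_RInt_Rplus; auto using ex_RInt_Rplus, ex_RInt_const.
    + intros z _. apply abs_pow_le_excess; lra.
  - right. unfold bound, energy.
    rewrite RInt_Rmult, !RInt_Rplus, RInt_Rconst; auto using ex_RInt_Rplus, ex_RInt_const.
    ring.
Qed.

Lemma abs_pow_integral_decay a p x0 d0 d1 x t K :
  0 < a -> 2 < p -> classical_solution a x0 d0 d1 x -> 0 <= t ->
  (forall s, 0 <= s <= t -> Rabs (d0 s) < K /\ Rabs (d1 s) < K) ->
  RInt (fun z => nnpow (Rabs (x t z)) p) 0 1 <=
  Rpower 2 p * (2 * (exp (- (2 * a) * t) * RInt (fun z => nnpow (Rabs (x 0 z)) p) 0 1)
                + Rpower K p).
Proof.
  intros Ha Hp Hsol Ht Hd.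
  destruct Hsol as [HC [[xt [xz [xzz [HD [Hxt [Hxz Hxzz]]]]]] [_ [Hbd _]]]].
  assert (HK : 0 < K) by (destruct (Hd 0) as [H _]; [lra|]; pose proof (Rabs_pos (d0 0)); lra).
  set (y := fun s z => - x s z).
  assert (HCy : cont2_on closed_dom y) by (apply cont2_opp; auto).
  assert (Hbelow : forall s, 0 <= s <= t -> (x s 0 < K /\ x s 1 < K) /\ (y s 0 < K /\ y s 1 < K)).
  { intros s Hs. unfold y. destruct (Hbd s ltac:(lra)) as [-> ->].
    destruct (Hd s Hs) as [A0 A1]. apply Rabs_def2 in A0. apply Rabs_def2 in A1.
    repeat split; lra. }
  assert (Dx := energy_decay a p K x xt xz xzz Ha Hp HC HD Hxt Hxz Hxzz t Ht
                  (fun s Hs => proj1 (Hbelow s Hs))).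
  assert (Dy := energy_decay a p K y _ _ _ Ha Hp HCy (heat_solution_opp _ _ _ _ _ HD)
                  (cont2_opp _ _ Hxt) (cont2_opp _ _ Hxz) (cont2_opp _ _ Hxzz) t Ht
                  (fun s Hs => proj2 (Hbelow s Hs))).
  assert (Ix := energy_le_abs_pow p K x 0 Hp ltac:(lra) HC ltac:(lra)).
  assert (Iy := energy_le_abs_pow p K y 0 Hp ltac:(lra) HCy ltac:(lra)).
  assert (Hyx : RInt (fun z => nnpow (Rabs (y 0 z)) p) 0 1
                = RInt (fun z => nnpow (Rabs (x 0 z)) p) 0 1)
    by (apply RInt_ext; intros; unfold y; rewrite Rabs_Ropp; reflexivity).
  rewrite Hyx in Iy.
  assert (Hsplit := abs_pow_le_energies p K x t Hp HK HC Ht). fold y in Hsplit.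
  assert (0 < exp (- (2 * a) * t)) by apply exp_pos.
  assert (0 <= energy p K x t) by (apply energy_ge0; auto).
  assert (0 <= energy p K y t) by (apply energy_ge0; auto).
  assert (0 < Rpower 2 p) by apply Rpower_gt0.
  eapply Rle_trans; [exact Hsplit|]. apply Rmult_le_compat_l; nra.
Qed.

Lemma Lp_norm_slice p x t : 0 < p -> cont2_on closed_dom x -> 0 <= t ->
  Lp_norm p (x t) = nnpow (RInt (fun z => nnpow (Rabs (x t z)) p) 0 1) (1/p).
Proof.
  intros Hp HC Ht. unfold Lp_norm. rewrite RInt01_RInt; auto. apply ex_RInt_abs_pow; auto.
Qed.

Lemma Lp_norm_initial a p x0 d0 d1 x : 0 < p -> classical_solution a x0 d0 d1 x ->
  Lp_norm p x0 = Lp_norm p (x 0).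
Proof.
  intros Hp [HC [_ [_ [_ Hinit]]]].
  assert (Hext : forall z, Rmin 0 1 < z < Rmax 0 1 ->
    nnpow (Rabs (x 0 z)) p = nnpow (Rabs (x0 z)) p).
  { intros z Hz. rewrite Rmin_left, Rmax_right in Hz by lra.
    rewrite Hinit; auto. unfold I01; lra. }
  assert (Hx := ex_RInt_abs_pow p x 0 Hp HC ltac:(lra)).
  unfold Lp_norm. rewrite !RInt01_RInt; [|exact Hx|exact (ex_RInt_ext _ _ _ _ Hext Hx)].
  f_equal. symmetry. apply RInt_ext, Hext.
Qed.

Lemma Rabs_le_smax d t B : 0 <= t -> (forall s, 0 <= s -> Rabs (d s) <= B) ->
  forall s, 0 <= s <= t -> Rabs (d s) <= smax d t.
Proof.
  intros Ht HB s Hs. unfold smax.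
  set (E := fun y => exists s, 0 <= s <= t /\ y = Rabs (d s)).
  assert (Hb : bound E) by (exists B; intros y [s' [Hs' ->]]; apply HB; lra).
  assert (Hn : exists y, E y) by (exists (Rabs (d 0)), 0; split; [lra|auto]).
  destruct (completeness E Hb Hn) as [m Hm].
  destruct (epsilon_spec (inhabits 0) (fun m => is_lub E m) (ex_intro _ m Hm)) as [Hu _].
  apply Hu. exists s; split; auto.
Qed.

Lemma nnpow_root_bound p e A I K : 2 < p -> 0 <= A -> 0 < e -> 0 < K ->
  I <= Rpower 2 p * (2 * (e * A) + Rpower K p) ->
  nnpow I (1/p) <= 8 * (nnpow e (1/p) * nnpow A (1/p)) + 4 * K.
Proof.
  intros Hp HA He HK HI. set (r := 1 / p).
  assert (Hr : 0 < r <= 1).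
  { unfold r. split; [apply Rdiv_lt_0_compat; lra|].
    apply (Rmult_le_reg_r p); [lra|]. unfold Rdiv. rewrite Rmult_assoc, Rinv_l; lra. }
  assert (0 < Rpower K p) by apply Rpower_gt0.
  assert (H2r : nnpow 2 r <= 2) by (apply nnpow_le_self; lra).
  assert (G1 := nnpow_ge0 e r). assert (G2 := nnpow_ge0 A r). assert (G3 := nnpow_ge0 2 r).
  apply (Rle_trans _ (nnpow (Rpower 2 p * (2 * (e * A) + Rpower K p)) r)); [apply nnpow_le; lra|].
  rewrite nnpow_mult, nnpow_Rpower_inv; [|lra..|apply Rpower_gt0|nra].
  assert (HS := nnpow_plus_le (2 * (e * A)) (Rpower K p) r ltac:(nra) ltac:(lra) Hr).
  unfold r in HS. rewrite nnpow_Rpower_inv in HS by lra. fold r in HS.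
  rewrite !nnpow_mult in HS by nra.
  assert (nnpow 2 r * (nnpow e r * nnpow A r) <= 2 * (nnpow e r * nnpow A r)).
  { apply Rmult_le_compat_r; auto. apply Rmult_le_pos; lra. }
  lra.
Qed.

Theorem mainTheorem9 (a : R) (Ha : 0 < a) :
  forall p : R, 2 < p ->
  exists Mp sigmap gammap : R, 0 < Mp /\ 0 < sigmap /\ 0 < gammap /\
    forall (x0 d0 d1 : R -> R) (x : R -> R -> R),
      C2_on I01 x0 ->
      in_U x0 d0 d1 ->
      classical_solution a x0 d0 d1 x ->
      forall t : R, 0 <= t ->
        Lp_norm p (x t) <=
          Mp * exp (- sigmap * t) * Lp_norm p x0
          + gammap * smax d0 t + gammap * smax d1 t.
Proof.
  intros p Hp. exists 8, (2 * a / p), 4.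
  split; [lra|]. split; [apply Rdiv_lt_0_compat; lra|]. split; [lra|].
  intros x0 d0 d1 x _ (_ & _ & _ & _ & [B0 HB0] & [B1 HB1]) Hsol t Ht.
  assert (HS0 := Rabs_le_smax d0 t B0 Ht HB0). assert (HS1 := Rabs_le_smax d1 t B1 Ht HB1).
  assert (0 <= smax d0 t) by (eapply Rle_trans; [apply Rabs_pos|apply (HS0 0)]; lra).
  assert (0 <= smax d1 t) by (eapply Rle_trans; [apply Rabs_pos|apply (HS1 0)]; lra).
  assert (HC : cont2_on closed_dom x) by apply Hsol.
  rewrite (Lp_norm_initial a p x0 d0 d1 x), !Lp_norm_slice by (auto; lra).
  apply le_epsilon. intros del Hdel.
  set (K := smax d0 t + smax d1 t + del / 4).
  assert (HI := abs_pow_integral_decay a p x0 d0 d1 x t K Ha Hp Hsol Ht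
                  ltac:(intros s Hs; specialize (HS0 s Hs); specialize (HS1 s Hs);
                        unfold K; split; lra)).
  assert (HA : 0 <= RInt (fun z => nnpow (Rabs (x 0 z)) p) 0 1)
    by (apply RInt_ge_0; [lra|apply ex_RInt_abs_pow; auto; lra|intros; apply nnpow_ge0]).
  eapply Rle_trans;
    [exact (nnpow_root_bound p _ _ _ K Hp HA (exp_pos _) ltac:(unfold K; lra) HI)|].
  rewrite nnpow_exp. replace (- (2 * a) * t * (1 / p)) with (- (2 * a / p) * t) by (field; lra).
  unfold K. lra.
Qed.
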